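(* In the setting below, assume each $f_i$ is $L_i$-smooth and there is $x_*$ with $F(x_* )=\inf F\in\mathbb R$. If $\eta_k\le\frac1{2n\sqrt{\bar LL^*}}$ for all $k\in[K]$, then for any $k\in[K]$, any permutation $\sigma_k$ and any $z\in\mathbb R^d$, $$\frac1n\sum_{i=1}^n\Big(B_{f_{\sigma_k^i}}(x_{k+1},x_k^i)-B_{f_{\sigma_k^i}}(z,x_k^i)\Big)\le\bar L\|x_{k+1}-x_k\|^2+8\eta_k^2n^2\bar L^2B_f(z,x_* )+4\eta_k^2R_k,$$ where $R_k=\sum_{i=2}^n\frac{L_{\sigma_k^i}}{n}\Big\|\sum_{j=1}^{i-1}\nabla f_{\sigma_k^j}(x_* )\Big\|^2$.
   Context: Setting. Let $n,d\in\mathbb N$, let $f_1,\dots,f_n:\mathbb R^d\to\mathbb R$ be convex, $f=\frac1n\sum_{i=1}^nf_i$, let $\psi:\mathbb R^d\to\mathbb R\cup\{+\infty\}$ be proper, closed and convex, and $F=f+\psi$. $B_g(x,y)=g(x)-g(y)-\langle\nabla g(y),x-y\rangle$ is the Bregman divergence. Proximal shuffling gradient method: given $x_1\in\mathrm{dom}\,\psi$, a number of epochs $K\ge2$ and stepsizes $\eta_k>0$, for $k=1,\dots,K$: choose a permutation $\sigma_k=(\sigma_k^1,\dots,\sigma_k^n)$ of $[n]=\{1,\dots,n\}$; set $x_k^1=x_k$ and $x_k^{i+1}=x_k^i-\eta_k\nabla f_{\sigma_k^i}(x_k^i)$ for $i=1,\dots,n$; set $x_{k+1}=\arg\min_{x\in\mathbb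 R^d}\{n\psi(x)+\frac{1}{2\eta_k}\|x-x_k^{n+1}\|^2\}$. Smoothness: each $f_i$ is differentiable with $\|\nabla f_i(x)-\nabla f_i(y)\|\le L_i\|x-y\|$ for all $x,y$, $L_i>0$; $\bar L=\frac1n\sum_iL_i$, $L^*=\max_iL_i$. *)

From HB Require Import structures.
From mathcomp Require Import all_boot all_order all_algebra all_fingroup.
From mathcomp Require Import all_classical all_reals all_analysis.
Import Order.TTheory GRing.Theory Num.Theory.
Import numFieldNormedType.Exports.

Set Implicit Arguments.
Unset Strict Implicit.
Unset Printing Implicit Defensive.

Local Open Scope ring_scope.

Section Defs.
Variables (R : realType) (d : nat).
Notation vec := 'rV[R]_d.

Definition dotv (u v : vec) : R := \sum_(i < d) u ord0 i * v ord0 i.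
Definition enorm (u : vec) : R := Num.sqrt (dotv u u).

Definition convex_fun (f : vec -> R) : Prop :=
  forall (x y : vec) (t : R), 0 <= t <= 1 ->
    f (t *: x + (1 - t) *: y) <= t * f x + (1 - t) * f y.

Definition has_gradient (f : vec -> R) (g : vec -> vec) : Prop :=
  forall x : vec, differentiable (f : vec -> R^o) x /\
    forall v : vec, 'd (f : vec -> R^o) x v = dotv (g x) v.

Definition smooth_with (f : vec -> R) (g : vec -> vec) (L : R) : Prop :=
  has_gradient f g /\ forall x y : vec, enorm (g x - g y) <= L * enorm (x - y).

Definition bregman (f : vec -> R) (g : vec -> vec) (x y : vec) : R :=
  f x - f y - dotv (g y) (x - y).

Definition proper_fun (psi : vec -> \bar R) : Prop :=
  (forall x, psi x != -oo%E) /\ (exists x, psi x \is a fin_num).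
Definition closed_fun (psi : vec -> \bar R) : Prop :=
  closed [set p : vec * R | (psi p.1 <= p.2%:E)%E].
Definition convex_efun (psi : vec -> \bar R) : Prop :=
  forall (x y : vec) (t : R), 0 <= t <= 1 ->
    (psi (t *: x + (1 - t) *: y)%R <= t%:E * psi x + (1 - t)%:E * psi y)%E.

(* i-th element (0-based) of a permutation, as an option *)
Definition perm_at n (s : {perm 'I_n}) (i : nat) : option 'I_n :=
  omap s (insub i).

(* inner iterates of one epoch: inner_iter ... i = x_k^{i+1} (paper's 1-based
   indexing), i.e. inner_iter 0 = x_k and
   inner_iter (i+1) = inner_iter i - eta * grad f_{sigma(i)} (inner_iter i) *)
Fixpoint inner_iter n (g : 'I_n -> vec -> vec) (s : {perm 'I_n}) (eta : R)
    (x0 : vec) (i : nat) : vec :=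
  match i with
  | 0 => x0
  | i'.+1 =>
      let y := inner_iter g s eta x0 i' in
      match perm_at s i' with
      | Some j => y - eta *: g j y
      | None => y
      end
  end.

End Defs.

(* Write y_i for the inner iterates of epoch k and B_i for the Bregman
   divergence of f_(sigma_k i).  The descent lemma gives
   B_i(x_(k+1), y_i) <= L_i (|x_(k+1) - x_k|^2 + |x_k - y_i|^2), and
   x_k - y_i is eta times the sum of the earlier gradients, split as
     sum_j (g_j(y_j) - g_j(z)) + sum_j (g_j(z) - g_j(x_star)) + sum_j g_j(x_star).
   Cocoercivity |g(a) - g(b)|^2 <= 2 L B(a, b) together with a weighted
   Cauchy-Schwarz inequality bounds the first two sums by sum_j B_j(z, y_j)
   and n B_f(z, x_star); the step size gives 4 eta^2 n^2 Lbar^2 <= 1, so the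
   first contribution is absorbed by the subtracted sum_i B_i(z, y_i). *)

From HB Require Import structures.
From mathcomp Require Import all_boot all_order all_algebra all_fingroup.
From mathcomp Require Import all_classical all_reals all_analysis.
From mathcomp Require Import ring lra.
Import Order.TTheory GRing.Theory Num.Theory.
Import numFieldNormedType.Exports.

Set Implicit Arguments.
Unset Strict Implicit.
Unset Printing Implicit Defensive.

Local Open Scope classical_set_scope.
Local Open Scope ring_scope.

Section InnerProduct.
Variables (R : realType) (d : nat).
Notation vec := 'rV[R]_d.

Definition normsq (u : vec) : R := dotv u u.

Lemma dotvC (u v : vec) : dotv u v = dotv v u.
Proof. by apply: eq_bigr => i _; rewrite mulrC. Qed.

Lemma dotvDl (u w v : vec) : dotv (u + w) v = dotv u v + dotv w v.
Proof. by rewrite /dotv -big_split; apply: eq_bigr => i _; rewrite !mxE mulrDl. Qed.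

Lemma dotvZl a (u v : vec) : dotv (a *: u) v = a * dotv u v.
Proof. by rewrite /dotv big_distrr; apply: eq_bigr => i _; rewrite !mxE -mulrA. Qed.

Lemma dotvNl (u v : vec) : dotv (- u) v = - dotv u v.
Proof. by rewrite -scaleN1r dotvZl mulN1r. Qed.

Lemma dotvBl (u w v : vec) : dotv (u - w) v = dotv u v - dotv w v.
Proof. by rewrite dotvDl dotvNl. Qed.

Lemma dotvDr (u w v : vec) : dotv v (u + w) = dotv v u + dotv v w.
Proof. by rewrite !(dotvC v) dotvDl. Qed.

Lemma dotvZr a (u v : vec) : dotv v (a *: u) = a * dotv v u.
Proof. by rewrite !(dotvC v) dotvZl. Qed.

Lemma dotvNr (u v : vec) : dotv v (- u) = - dotv v u.
Proof. by rewrite !(dotvC v) dotvNl. Qed.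

Lemma dotvBr (u w v : vec) : dotv v (u - w) = dotv v u - dotv v w.
Proof. by rewrite !(dotvC v) dotvBl. Qed.

Lemma dotv0l (v : vec) : dotv 0 v = 0.
Proof. by rewrite -(scale0r 0) dotvZl mul0r. Qed.

Lemma dotv_suml (I : Type) (r : seq I) (P : pred I) (w : I -> vec) v :
  dotv (\sum_(i <- r | P i) w i) v = \sum_(i <- r | P i) dotv (w i) v.
Proof. by elim/big_rec2: _ => [|i a b _ <-]; rewrite ?dotv0l ?dotvDl. Qed.

Lemma normsq_ge0 (u : vec) : 0 <= normsq u.
Proof. by apply: sumr_ge0 => i _; rewrite -expr2 sqr_ge0. Qed.

Lemma enorm_sqr (u : vec) : enorm u ^+ 2 = normsq u.
Proof. by rewrite sqr_sqrtr // normsq_ge0. Qed.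

Lemma normsqN (u : vec) : normsq (- u) = normsq u.
Proof. by rewrite /normsq dotvNl dotvNr opprK. Qed.

Lemma normsqZ a (u : vec) : normsq (a *: u) = a ^+ 2 * normsq u.
Proof. by rewrite /normsq dotvZl dotvZr mulrA expr2. Qed.

Lemma normsqD (u v : vec) : normsq (u + v) = normsq u + 2 * dotv u v + normsq v.
Proof. rewrite /normsq dotvDl !dotvDr (dotvC v u); ring. Qed.

Lemma normsqB (u v : vec) : normsq (u - v) = normsq u - 2 * dotv u v + normsq v.
Proof. by rewrite normsqD dotvNr normsqN; ring. Qed.

Lemma normsqD_le (u v : vec) : normsq (u + v) <= 2 * normsq u + 2 * normsq v.
Proof. by have := normsq_ge0 (u - v); rewrite normsqB normsqD; lra. Qed.

Lemma normsqD3_le (u v w : vec) :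
  normsq (u + v + w) <= 2 * normsq u + 4 * normsq v + 4 * normsq w.
Proof.
by rewrite -addrA; have := normsqD_le u (v + w); have := normsqD_le v w; lra.
Qed.

Lemma dotv_abs_le (w u : vec) m :
  0 < m -> normsq w <= m ^+ 2 * normsq u -> `|dotv w u| <= m * normsq u.
Proof.
move=> m0 hw; have := normsq_ge0 (w - m *: u); have := normsq_ge0 (w + m *: u).
rewrite normsqB normsqD normsqZ dotvZr => hp hm.
have hm2 : 2 * m * `|dotv w u| <= 2 * m * (m * normsq u).
  by case: (ler0P (dotv w u)) => _; nra.
by rewrite ler_pM2l ?mulr_gt0 in hm2.
Qed.

End InnerProduct.

Section Gradient.
Variables (R : realType) (d : nat).
Notation vec := 'rV[R]_d.
Variables (f : vec -> R) (g : vec -> vec).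
Hypothesis gradf : has_gradient f g.

Lemma is_derive_line (y u : vec) (t : R) :
  is_derive t 1 (fun s : R => f (s *: u + y)) (dotv (g (t *: u + y)) u).
Proof.
have [df dg] := gradf (t *: u + y).
(* the difference quotients of [s |-> f (s u + y)] at [t] are those of [f]
   at [t u + y] in direction [u] *)
have e : (fun h : R => h^-1 *: (((fun s : R => f (s *: u + y) : R^o) \o shift t) (h *: 1)
             - (fun s : R => f (s *: u + y) : R^o) t))
   = (fun h : R => h^-1 *: (((f : vec -> R^o) \o shift (t *: u + y)) (h *: u)
             - (f : vec -> R^o) (t *: u + y))).
  apply: funext => h /=; congr (_ *: (f _ - _)).
  by rewrite scalerDl addrA [h *: 1]mulr1.
apply: DeriveDef; first by rewrite /derivable e; apply: diff_derivable.
by rewrite /derive e -dg -deriveE.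
Qed.

(* The quadratic correction [B t^2] is what yields the constant [L / 2] in the
   descent lemma. *)
Lemma line_mvt (y u : vec) (A B t : R) : 0 < t ->
  exists2 c, 0 < c < t &
    f (t *: u + y) - f y - A * t - B * t ^+ 2
    = t * (dotv (g (c *: u + y)) u - A - 2 * c * B).
Proof.
move=> t0; pose q := (fun s : R => f (s *: u + y)) - A \*: (@id R) - B \*: ((@id R) ^+ 2).
have dq (s : R) : is_derive s 1 q (dotv (g (s *: u + y)) u - A - 2 * s * B).
  have -> : dotv (g (s *: u + y)) u - A - 2 * s * B
    = dotv (g (s *: u + y)) u - A *: 1 - B *: ((2%:R * s ^+ 1) *: 1).
    by rewrite /GRing.scale /=; ring.
  have dA : is_derive s 1 (A \*: (@id R)) (A *: (1 : R)) by exact: is_deriveZ.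
  have dB : is_derive s 1 (B \*: ((@id R) ^+ 2)) (B *: ((2%:R * s ^+ 1) *: (1 : R))).
    by apply: is_deriveZ; exact: is_deriveX.
  exact: is_deriveB (is_deriveB (is_derive_line y u s) dA) dB.
have cq : {within `[0, t], continuous q}.
  by apply: derivable_within_continuous => r _; exact: ex_derive.
have [c c0t hc] := MVT t0 (fun s _ => dq s) cq.
exists c; first by rewrite in_itv /= in c0t.
have qE r : q r = f (r *: u + y) - A * r - B * r ^+ 2 by [].
move: hc; rewrite !qE scale0r add0r subr0 mulr0 expr0n /= mulr0 !subr0 => hc.
by rewrite [RHS]mulrC -hc; ring.
Qed.

End Gradient.

Lemma ler_of_forall_lerD (R : realFieldType) (a b c : R) : 0 <= c ->
  (forall t, 0 < t <= 1 -> a <= b + t * c) -> a <= b.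
Proof.
move=> c0 h; apply/ler_addgt0Pr => e e0.
have ec : 0 < e + c by rewrite ltr_wpDr.
have t0 : 0 < e / (e + c) by rewrite divr_gt0.
have t1 : e / (e + c) <= 1 by rewrite ler_pdivrMr // mul1r lerDl.
apply: (le_trans (h _ (introT andP (conj t0 t1)))); rewrite lerD2l.
by rewrite mulrAC ler_pdivrMr // ler_pM2l // lerDr ltW.
Qed.

Section Smooth.
Variables (R : realType) (d : nat).
Notation vec := 'rV[R]_d.
Variables (f : vec -> R) (g : vec -> vec) (L : R).
Hypotheses (smooth : smooth_with f g L) (L0 : 0 < L).

Lemma normsq_grad_sub_le a b : normsq (g a - g b) <= L ^+ 2 * normsq (a - b).
Proof.
have := smooth.2 a b; rewrite -!enorm_sqr.
have := sqrtr_ge0 (dotv (g a - g b) (g a - g b)); have := sqrtr_ge0 (dotv (a - b) (a - b)).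
rewrite /enorm; nra.
Qed.

Lemma dotv_grad_line_le (y u : vec) c :
  0 < c -> `|dotv (g (c *: u + y) - g y) u| <= L * c * normsq u.
Proof.
move=> c0; apply: dotv_abs_le; first by rewrite mulr_gt0.
by rewrite exprMn -mulrA -normsqZ -{2}[c *: u](addrK y); exact: normsq_grad_sub_le.
Qed.

Lemma bregman_le_smooth x y : bregman f g x y <= L / 2 * normsq (x - y).
Proof.
set u := x - y; set S := normsq u.
have [c /andP [c0 _] hc] := line_mvt smooth.1 y u (dotv (g y) u) (L / 2 * S) ltr01.
have := dotv_grad_line_le y u c0; rewrite -/S dotvBl ler_norml => /andP [_ hle].
have eLc : 2 * c * (L / 2 * S) = L * c * S by field.
move: hc; rewrite scale1r subrK expr1n !mulr1 mul1r eLc /bregman -/u; lra.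
Qed.

Hypothesis convf : convex_fun f.

Lemma bregman_ge0 x y : 0 <= bregman f g x y.
Proof.
set u := x - y; set S := normsq u.
rewrite /bregman subr_ge0; apply: (ler_of_forall_lerD (c := L * S)).
  by rewrite mulr_ge0 ?normsq_ge0 ?ltW.
move=> t /andP [t0 t1].
have [c /andP [c0 ct] hc] := line_mvt smooth.1 y u (dotv (g y) u) 0 t0.
have := dotv_grad_line_le y u c0; rewrite -/S dotvBl ler_norml => /andP [hge _].
have := convf x y (t := t); rewrite t1 ltW // => /(_ isT).
have -> : t *: x + (1 - t) *: y = t *: u + y.
  by rewrite /u scalerBr scalerBl scale1r addrA addrAC.
move: hc; rewrite !mul0r !subr0 => hc hcv.
have hcL : L * c * S <= L * t * S by rewrite ler_wpM2r ?normsq_ge0 // ler_pM2l // ltW.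
have : t * dotv (g y) u <= t * (f x - f y + t * (L * S)) by nra.
by rewrite ler_pM2l // => h; lra.
Qed.

(* Apply the descent lemma at [x - L^-1 (g x - g y)] and nonnegativity of the
   Bregman divergence at [y]. *)
Lemma normsq_grad_sub_le_bregman x y :
  normsq (g x - g y) <= 2 * L * bregman f g x y.
Proof.
set w := g x - g y; set p := x - L^-1 *: w.
have h1 := bregman_ge0 p y; have h2 := bregman_le_smooth p x.
have e1 : p - y = (x - y) - L^-1 *: w by rewrite /p addrAC.
have e2 : p - x = - (L^-1 *: w) by rewrite /p addrAC subrr add0r.
rewrite /bregman e2 normsqN normsqZ dotvNr dotvZr in h2.
rewrite /bregman e1 dotvBr dotvZr in h1.
have ew : normsq w = dotv (g x) w - dotv (g y) w by rewrite /normsq {1}/w dotvBl.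
have eL : L / 2 * (L^-1 ^+ 2 * normsq w) = L^-1 * normsq w / 2.
  by field; rewrite gt_eqF.
rewrite eL ew mulrBr in h2.
have key : L^-1 * normsq w / 2 <= bregman f g x y.
  rewrite ew mulrBr /bregman.
  set a := L^-1 * dotv (g x) w in h2 *; set b := L^-1 * dotv (g y) w in h1 h2 *.
  lra.
have -> : normsq w = 2 * L * (L^-1 * normsq w / 2) by field; rewrite gt_eqF.
by rewrite ler_wpM2l // mulr_ge0 // ltW.
Qed.

End Smooth.

Lemma ler_psum_cond (R : numDomainType) (I : Type) (r : seq I) (P : pred I) (F : I -> R) :
  (forall i, 0 <= F i) -> \sum_(i <- r | P i) F i <= \sum_(i <- r) F i.
Proof. by move=> F0; rewrite [leRHS](bigID P) /= lerDl sumr_ge0. Qed.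

Lemma sqrD_le_weighted (R : realFieldType) (B C Q b c : R) :
  0 < c -> 0 <= C -> 0 <= Q -> B ^+ 2 <= C * Q ->
  (b + B) ^+ 2 <= (c + C) * (b ^+ 2 / c + Q).
Proof.
move=> c0 C0 Q0 hBCQ; set q := b / c.
have -> : b = c * q by rewrite /q mulrC divfK // gt_eqF.
have -> : (c * q) ^+ 2 / c = c * q ^+ 2 by field; rewrite gt_eqF.
suff key : 0 <= Q + C * q ^+ 2 - 2 * q * B by nra.
have [C00|Cn0] := eqVneq C 0.
  rewrite C00 mul0r in hBCQ; have -> : B = 0 by nra.
  by rewrite C00; lra.
have Cp : 0 < C by rewrite lt_def Cn0.
rewrite -(pmulr_rge0 _ Cp); have := sqr_ge0 (B - C * q); nra.
Qed.

Lemma sqr_sum_le_weighted (R : realFieldType) (I : Type) (r : seq I) (P : pred I)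
    (c b : I -> R) :
  (forall j, P j -> 0 < c j) ->
  (\sum_(j <- r | P j) b j) ^+ 2 <=
    (\sum_(j <- r | P j) c j) * \sum_(j <- r | P j) (b j ^+ 2 / c j).
Proof.
move=> c0; elim: r => [|j r IH]; first by rewrite !big_nil expr0n mul0r.
rewrite !big_cons; case: ifP => // Pj.
apply: sqrD_le_weighted => //; first exact: c0.
  by apply: sumr_ge0 => i Pi; exact/ltW/c0.
by apply: sumr_ge0 => i Pi; rewrite divr_ge0 ?sqr_ge0 // ltW // c0.
Qed.

Section VectorSums.
Variables (R : realType) (d : nat).
Notation vec := 'rV[R]_d.

Lemma normsq_sum_le_weighted (I : Type) (r : seq I) (P : pred I) (c : I -> R)
    (w : I -> vec) :
  (forall j, P j -> 0 < c j) ->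
  normsq (\sum_(j <- r | P j) w j) <=
    (\sum_(j <- r | P j) c j) * \sum_(j <- r | P j) (normsq (w j) / c j).
Proof.
move=> c0; rewrite /normsq /dotv.
under eq_bigr => m _ do rewrite summxE -expr2.
under [X in _ <= _ * X]eq_bigr => j _ do rewrite mulr_suml.
rewrite exchange_big /= mulr_sumr; apply: ler_sum => m _.
under [X in _ <= _ * X]eq_bigr => j _ do rewrite -expr2.
exact: sqr_sum_le_weighted.
Qed.

Lemma normsq_sum_cond_le (I : Type) (r : seq I) (P : pred I) (l c : I -> R)
    (w : I -> vec) :
  (forall j, 0 < l j) -> (forall j, normsq (w j) <= l j * c j) ->
  normsq (\sum_(j <- r | P j) w j) <= (\sum_(j <- r) l j) * \sum_(j <- r) c j.
Proof.
move=> l0 hw; have wl j : normsq (w j) / l j <= c j by rewrite ler_pdivrMr // mulrC.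
have wl0 j : 0 <= normsq (w j) / l j by rewrite divr_ge0 ?normsq_ge0 ?ltW.
apply: le_trans (normsq_sum_le_weighted r w (fun j (_ : P j) => l0 j)) _.
apply: ler_pM.
- by apply: sumr_ge0 => j _; exact/ltW.
- exact: sumr_ge0.
- by apply: ler_psum_cond => j; exact/ltW.
- by apply: le_trans (ler_psum_cond _ _ wl0) _; apply: ler_sum.
Qed.

End VectorSums.

Lemma sum_ord_ltS (V : nmodType) n (F : 'I_n -> V) (i : 'I_n) :
  \sum_(j < n | (j < i.+1)%N) F j = \sum_(j < n | (j < i)%N) F j + F i.
Proof.
rewrite (bigD1 i) ?ltnSn //= addrC; congr (_ + _).
by apply: eq_bigl => j; rewrite ltnS -val_eqE /=; case: ltngtP.
Qed.

Lemma inner_iter_sum (R : realType) (d n : nat) (g : 'I_n -> 'rV[R]_d -> 'rV[R]_d)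
    (s : {perm 'I_n}) (eta : R) (x0 : 'rV[R]_d) (i : nat) : (i <= n)%N ->
  x0 - inner_iter g s eta x0 i =
    eta *: \sum_(j < n | (j < i)%N) g (s j) (inner_iter g s eta x0 j).
Proof.
elim: i => [_|i IH hi].
  by rewrite subrr big_pred0 ?scaler0.
have -> : inner_iter g s eta x0 i.+1 =
    inner_iter g s eta x0 i - eta *: g (s (Ordinal hi)) (inner_iter g s eta x0 i).
  rewrite [LHS]/= /perm_at (@insubT _ _ 'I_n i hi).
  reflexivity.
rewrite (sum_ord_ltS (fun j => g (s j) (inner_iter g s eta x0 j)) (Ordinal hi)).
rewrite scalerDr -IH; last exact: ltnW.
by rewrite opprB addrA addrAC.
Qed.

Lemma bregman_avg (R : realType) (n d : nat) (f : 'I_n -> 'rV[R]_d -> R)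
    (g : 'I_n -> 'rV[R]_d -> 'rV[R]_d) (x y : 'rV[R]_d) :
  bregman (fun v => n%:R^-1 * \sum_(i < n) f i v) (fun v => n%:R^-1 *: \sum_(i < n) g i v) x y
  = n%:R^-1 * \sum_(i < n) bregman (f i) (g i) x y.
Proof. by rewrite /bregman dotvZl dotv_suml !sumrB; ring. Qed.

Lemma avg_le_bigmax (R : realFieldType) n (F : 'I_n -> R) : (0 < n)%N ->
  n%:R^-1 * \sum_(i < n) F i <= \big[Num.max/0]_(i < n) F i.
Proof.
move=> n0; rewrite ler_pdivrMl ?ltr0n // mulr_natl -[n in _ *+ n]card_ord -sumr_const.
by apply: ler_sum => i _; exact: le_bigmax.
Qed.

Lemma stepsize_sqr_le (R : realType) (N Lb Ls eta : R) :
  0 < N -> 0 < eta -> 0 <= Lb <= Ls ->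
  eta <= (2 * N * Num.sqrt (Lb * Ls))^-1 -> 4 * eta ^+ 2 * (N * Lb) ^+ 2 <= 1.
Proof.
move=> N0 eta0 /andP [Lb0 LbLs] heta.
have LL0 : 0 <= Lb * Ls by rewrite mulr_ge0 // (le_trans Lb0 LbLs).
set r := Num.sqrt (Lb * Ls) in heta.
have r2 : r ^+ 2 = Lb * Ls by rewrite sqr_sqrtr.
have r0 : 0 < r.
  rewrite lt_def sqrtr_ge0 andbT; apply: contraTneq heta => ->.
  by rewrite mulr0 invr0 -ltNge.
have D0 : 0 < 2 * N * r by rewrite !mulr_gt0.
rewrite -(ler_pM2r D0) mulVf ?gt_eqF // in heta.
have h1 : (eta * (2 * N * r)) ^+ 2 <= 1 by rewrite expr_le1 // mulr_ge0 ?ltW.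
have h2 : Lb ^+ 2 <= Lb * Ls by rewrite expr2; exact: ler_wpM2l.
rewrite (_ : _ ^+ 2 = 4 * eta ^+ 2 * N ^+ 2 * (Lb * Ls)) in h1; last first.
  by rewrite -r2; ring.
apply: le_trans h1.
have c0 : 0 <= 4 * eta ^+ 2 * N ^+ 2 by rewrite !mulr_ge0 // ltW.
have h3 := ler_wpM2l c0 h2; rewrite !mulrA in h3.
by rewrite exprMn !mulrA.
Qed.

Section Epoch.
Variables (R : realType) (n d : nat).
Notation vec := 'rV[R]_d.
Variables (f : 'I_n -> vec -> R) (g : 'I_n -> vec -> vec) (L : 'I_n -> R).
Hypotheses (L0 : forall i, 0 < L i) (smooth : forall i, smooth_with (f i) (g i) (L i))
  (convf : forall i, convex_fun (f i)).
Variables (s : {perm 'I_n}) (eta : R) (x0 x1 z xstar : vec).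

Local Notation Bs i := (bregman (f (s i)) (g (s i))).
Local Notation y := (inner_iter g s eta x0).
Local Notation SL := (\sum_(i < n) L i).
Local Notation W i := (\sum_(j < n | (j < i)%N) g (s j) xstar).

Lemma sum_L_perm : \sum_(i < n) L (s i) = SL.
Proof. by rewrite [RHS](reindex_inj (@perm_inj _ s)). Qed.

Lemma normsq_sum_grad_sub_le (P : pred 'I_n) (a b : 'I_n -> vec) :
  normsq (\sum_(j < n | P j) (g (s j) (a j) - g (s j) (b j)))
  <= 2 * SL * \sum_(j < n) Bs j (a j) (b j).
Proof.
rewrite -sum_L_perm -mulrA mulrCA mulr_sumr.
apply: normsq_sum_cond_le => [j|j]; first exact: L0.
by rewrite mulrA [_ * 2]mulrC; apply: normsq_grad_sub_le_bregman.
Qed.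

Lemma normsq_drift_le (i : 'I_n) :
  normsq (x0 - y i) <= eta ^+ 2 *
    (4 * SL * \sum_(j < n) Bs j z (y j) + 8 * SL * \sum_(j < n) Bs j z xstar
     + 4 * normsq (W i)).
Proof.
set U := \sum_(j < n | (j < i)%N) (g (s j) z - g (s j) (y j)).
set V := \sum_(j < n | (j < i)%N) (g (s j) z - g (s j) xstar).
rewrite inner_iter_sum 1?ltnW //.
have -> : \sum_(j < n | (j < i)%N) g (s j) (y j) = - U + V + W i.
  rewrite -sumrN -!big_split; apply: eq_bigr => j _ /=.
  by rewrite opprB addrA !subrK.
rewrite normsqZ ler_wpM2l ?sqr_ge0 //.
have := normsqD3_le (- U) V (W i); rewrite normsqN.
have := normsq_sum_grad_sub_le (fun j => (j < i)%N) (fun=> z) y.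
have := normsq_sum_grad_sub_le (fun j => (j < i)%N) (fun=> z) (fun=> xstar).
rewrite -/U -/V; lra.
Qed.

Lemma bregman_step_le (i : 'I_n) :
  Bs i x1 (y i) <= L (s i) * (normsq (x1 - x0) + normsq (x0 - y i)).
Proof.
apply: le_trans (bregman_le_smooth (smooth (s i)) (L0 (s i)) _ _) _.
have -> : x1 - y i = (x1 - x0) + (x0 - y i) by rewrite addrA subrK.
have := normsqD_le (x1 - x0) (x0 - y i); have := L0 (s i); nra.
Qed.

Lemma epoch_bregman_gap_le : 4 * eta ^+ 2 * SL ^+ 2 <= 1 ->
  \sum_(i < n) (Bs i x1 (y i) - Bs i z (y i))
  <= SL * normsq (x1 - x0) + 8 * eta ^+ 2 * SL ^+ 2 * \sum_(i < n) Bs i z xstar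
     + 4 * eta ^+ 2 * \sum_(i < n) L (s i) * normsq (W i).
Proof.
move=> hstep.
set SB := \sum_(i < n) Bs i z (y i); set SX := \sum_(i < n) Bs i z xstar.
set c := normsq (x1 - x0) + eta ^+ 2 * (4 * SL * SB + 8 * SL * SX).
have gap_le i : Bs i x1 (y i) - Bs i z (y i)
    <= L (s i) * c + 4 * eta ^+ 2 * (L (s i) * normsq (W i)) - Bs i z (y i).
  rewrite lerD2r; apply: le_trans (bregman_step_le i) _.
  have := ler_wpM2l (ltW (L0 (s i))) (normsq_drift_le i).
  rewrite -/SB -/SX /c; lra.
apply: le_trans (ler_sum _ (fun i _ => gap_le i)) _.
rewrite sumrB big_split /= -mulr_suml -mulr_sumr sum_L_perm -/SB.
have SB0 : 0 <= SB by apply: sumr_ge0 => i _; exact: bregman_ge0.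
have := ler_wpM2r SB0 hstep; rewrite /c; nra.
Qed.

Lemma drift_remainderE :
  \sum_(i < n | (0 < i)%N) (L (s i) / n%:R * enorm (W i) ^+ 2)
  = n%:R^-1 * \sum_(i < n) L (s i) * normsq (W i).
Proof.
rewrite mulr_sumr [RHS](bigID (fun i : 'I_n => (0 < i)%N)) /= [X in _ = _ + X]big1.
  by rewrite addr0; apply: eq_bigr => i _; rewrite enorm_sqr [RHS]mulrA [_^-1 * _]mulrC.
move=> i; rewrite lt0n negbK => /eqP i0.
by rewrite big_pred0 => [|j]; rewrite ?i0 ?ltn0 // /normsq dotv0l !mulr0.
Qed.

End Epoch.

Theorem mainTheorem7 (R : realType) (n d : nat)
  (f : 'I_n -> 'rV[R]_d -> R) (g : 'I_n -> 'rV[R]_d -> 'rV[R]_d)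
  (L : 'I_n -> R) (psi : 'rV[R]_d -> \bar R)
  (K : nat) (eta : nat -> R) (sigma : nat -> {perm 'I_n})
  (x : nat -> 'rV[R]_d) (xstar : 'rV[R]_d) :
  (0 < n)%N ->
  (forall i, convex_fun (f i)) ->
  (forall i, 0 < L i) ->
  (forall i, smooth_with (f i) (g i) (L i)) ->
  proper_fun psi -> closed_fun psi -> convex_efun psi ->
  (2 <= K)%N ->
  (forall k, (1 <= k <= K)%N -> 0 < eta k) ->
  (psi (x 1%N) < +oo)%E ->
  (* x_{k+1} = argmin_y { n psi(y) + 1/(2 eta_k) ||y - x_k^{n+1}||^2 } *)
  (forall k, (1 <= k <= K)%N -> forall y : 'rV[R]_d,
     (n%:R%:E * psi (x k.+1)
        + ((2 * eta k)^-1 * enorm (x k.+1 - inner_iter g (sigma k) (eta k) (x k) n) ^+ 2)%:E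
      <= n%:R%:E * psi y
        + ((2 * eta k)^-1 * enorm (y - inner_iter g (sigma k) (eta k) (x k) n) ^+ 2)%:E)%E) ->
  (* F(x_* ) = inf F, finite; F = f + psi with f = (1/n) sum f_i *)
  (psi xstar \is a fin_num) ->
  (forall y : 'rV[R]_d,
     ((n%:R^-1 * \sum_(i < n) f i xstar)%:E + psi xstar
      <= (n%:R^-1 * \sum_(i < n) f i y)%:E + psi y)%E) ->
  (forall k, (1 <= k <= K)%N ->
     eta k <= (2 * n%:R * Num.sqrt ((n%:R^-1 * \sum_(i < n) L i)
                                    * \big[Num.max/0]_(i < n) L i))^-1) ->
  forall k, (1 <= k <= K)%N -> forall z : 'rV[R]_d,
    n%:R^-1 * \sum_(i < n)
        (bregman (f (sigma k i)) (g (sigma k i)) (x k.+1)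
                 (inner_iter g (sigma k) (eta k) (x k) i)
         - bregman (f (sigma k i)) (g (sigma k i)) z
                 (inner_iter g (sigma k) (eta k) (x k) i))
    <= (n%:R^-1 * \sum_(i < n) L i) * enorm (x k.+1 - x k) ^+ 2
       + 8 * eta k ^+ 2 * n%:R ^+ 2 * (n%:R^-1 * \sum_(i < n) L i) ^+ 2
           * bregman (fun y => n%:R^-1 * \sum_(i < n) f i y)
                     (fun y => n%:R^-1 *: \sum_(i < n) g i y) z xstar
       + 4 * eta k ^+ 2 *
           \sum_(i < n | (0 < i)%N)
              (L (sigma k i) / n%:R *
               enorm (\sum_(j < n | (j < i)%N) g (sigma k j) xstar) ^+ 2).
Proof.
move=> n0 convf Lpos smooth _ _ _ _ eta_gt0 _ _ _ _ step k hk z.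
set N : R := n%:R; have N0 : 0 < N by rewrite ltr0n.
set SL := \sum_(i < n) L i.
have Lavg : 0 <= N^-1 * SL <= \big[Num.max/0]_(i < n) L i.
  rewrite avg_le_bigmax // andbT mulr_ge0 ?invr_ge0 ?ler0n //.
  by apply: sumr_ge0 => i _; exact/ltW.
have := stepsize_sqr_le N0 (eta_gt0 k hk) Lavg (step k hk).
rewrite mulVKf ?gt_eqF // => step_k.
rewrite bregman_avg -/N enorm_sqr.
have -> : \sum_(i < n) bregman (f i) (g i) z xstar
    = \sum_(i < n) bregman (f (sigma k i)) (g (sigma k i)) z xstar.
  by rewrite [LHS](reindex_inj (@perm_inj _ (sigma k))).
rewrite drift_remainderE -/N [leRHS](_ : _ = N^-1 * (SL * normsq (x k.+1 - x k)
    + 8 * eta k ^+ 2 * SL ^+ 2 * \sum_(i < n) bregman (f (sigma k i)) (g (sigma k i)) z xstar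
    + 4 * eta k ^+ 2 * \sum_(i < n) L (sigma k i)
        * normsq (\sum_(j < n | (j < i)%N) g (sigma k j) xstar))); last first.
  by field; rewrite gt_eqF.
by rewrite ler_pM2l ?invr_gt0 //; exact: epoch_bregman_gap_le.
Qed.
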